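(* Let $(H,A,C)$ be a Doi-Hopf datum with $H$ a Hopf algebra. Let $V$ be the $k$-module of natural transformations $\nu:GF\to 1_{\mathcal C}$ and $V_1$ the $k$-module defined below. Then $\nu\mapsto \nu_{C\otimes A}$ is a $k$-module isomorphism $V\to V_1$, whose inverse sends $\nu\in V_1$ to the natural transformation given by $\nu_M(c\otimes m)=\sum m_{<0>}\big((\varepsilon_C\otimes I_A)\nu(c\otimes m_{<-1>}\otimes 1_A)\big)$. Under this isomorphism, normalized elements of $V_1$ correspond exactly to natural transformations $\nu$ with $\nu_M\circ\rho_M=I_M$ for all $M\in\mathcal C$. Consequently the forgetful functor $F:{}^C\mathcal M(H)_A\to\mathcal M_A$ is separable if and only if $V_1$ contains a normalized element.
   Context: $k$ commutative ring; Sweedler notation $\Delta(c)=\sum c_{(1)}\otimes c_{(2)}$, $\rho(m)=\sum m_{<-1>}\otimes m_{<0>}$ (iterated $m_{<-2>}\otimes m_{<-1>}\otimes m_{<0>}$). A Doi-Hopf datum $(H,A,C)$: $H$ a bialgebra, $A$ a left $H$-comodule algebra, $C$ a right $H$-module coalgebra ($\Delta(c\cdot h)=\sum c_{(1)}\cdot h_{(1)}\otimes c_{(2)}\cdot h_{(2)}$, $\varepsilon(c\cdot h)=\varepsilon(c)\varepsilon(h)$), $C$ flat over $k$. $\mathcal C={}^C\mathcal M(H)_A$: right $A$-modules with left $C$-coaction satisfying $\rho_M(ma)=\sum m_{<-1>}\cdot a_{<-1>}\otimes m_{<0>}a_{<0>}$, with $A$-linear $C$-colinear maps. $F$ forgets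 the coaction; its right adjoint $G(N)=C\otimes N$ has $(c\otimes n)a=\sum c\cdot a_{<-1>}\otimes na_{<0>}$, $\rho(c\otimes n)=\sum c_{(1)}\otimes c_{(2)}\otimes n$; the unit is $\rho_M$. So $C\otimes A$ and $C\otimes C\otimes A$ are Doi-Hopf modules (the latter with $(c\otimes d\otimes b)a=\sum c\cdot a_{<-2>}\otimes d\cdot a_{<-1>}\otimes ba_{<0>}$, coaction on the first factor). $V_1$ is the $k$-module of morphisms $\nu:C\otimes C\otimes A\to C\otimes A$ in $\mathcal C$ such that for all $a,b\in A$, $c,d\in C$: (i) $\nu(c\otimes d\otimes ba)=b\cdot\nu(c\otimes d\otimes a)$ where $b\cdot(c'\otimes a')=c'\otimes ba'$; (ii) with $\theta_{d'}=(\varepsilon_C\otimes I_A)\nu(c\otimes d'\otimes 1_A)$, $\sum d_{(2)}\cdot(\theta_{d_{(1)}})_{<-1>}\otimes(\theta_{d_{(1)}})_{<0>}=\nu(c\otimes d\otimes 1_A)$. $\nu\in V_1$ is normalized if $\sum\nu(c_{(1)}\otimes c_{(2)}\otimes a)=c\otimes a$ for all $c,a$. A functor $F:\mathcal C\to\mathcal D$ is separable if the natural map $\mathrm{Hom}_{\mathcal C}(M,N)\to\mathrm{Hom}_{\mathcal D}(FM,FN)$ has a left inverse natural in $M,N$. *)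

(* Tensor products of k-modules are not in MathComp: they are given
   abstractly by their universal property (see [tensor] below) and the
   theorem is stated for an arbitrary choice of tensor products. *)
From HB Require Import structures.
From mathcomp Require Import all_boot all_algebra.
Set Implicit Arguments. Unset Strict Implicit. Unset Printing Implicit Defensive.
Import GRing.Theory.
Local Open Scope ring_scope.

Section Tensor.
Variable k : comPzRingType.

Definition lin (U V : lmodType k) (f : U -> V) :=
  (forall x y, f (x + y) = f x + f y) /\ (forall (a : k) x, f (a *: x) = a *: f x).
Definition lin_scal (U : lmodType k) (f : U -> k) :=
  (forall x y, f (x + y) = f x + f y) /\ (forall (a : k) x, f (a *: x) = a * f x).
Definition bilin (U V W : lmodType k) (f : U -> V -> W) :=
  (forall v, lin (fun u => f u v)) /\ (forall u, lin (f u)).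

(* A tensor product of U and V: a k-module with a bilinear map satisfying
   the universal property.  [tlift f] is the induced linear map when f is
   bilinear (its value on non-bilinear f is irrelevant). *)
Record tensor (U V : lmodType k) := Tensor {
  tens_car : lmodType k;
  tmul : U -> V -> tens_car;
  tlift : forall W : lmodType k, (U -> V -> W) -> tens_car -> W;
  tmul_bilin : bilin tmul;
  tlift_lin : forall W f, bilin f -> lin (@tlift W f);
  tlift_tmul : forall W f, bilin f -> forall u v, @tlift W f (tmul u v) = f u v;
  tens_uniq : forall (W : lmodType k) (g h : tens_car -> W), lin g -> lin h ->
     (forall u v, g (tmul u v) = h (tmul u v)) -> forall x, g x = h x }.

Definition tensor_provider := forall U V : lmodType k, tensor U V.

Variable T : tensor_provider.

Definition tens (U V : lmodType k) : lmodType k := tens_car (T U V).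
Definition tm {U V : lmodType k} (u : U) (v : V) : tens U V := tmul (T U V) u v.
Definition tl {U V W : lmodType k} (f : U -> V -> W) : tens U V -> W :=
  @tlift _ _ (T U V) W f.

Definition tmap {U V U' V' : lmodType k} (f : U -> U') (g : V -> V')
  : tens U V -> tens U' V' := tl (fun u v => tm (f u) (g v)).
Definition tassoc {U V W : lmodType k} : tens (tens U V) W -> tens U (tens V W) :=
  tl (fun x w => tl (fun u v => tm u (tm v w)) x).
Definition epsI {X Y : lmodType k} (eps : X -> k) : tens X Y -> Y :=
  tl (fun x y => eps x *: y).
Definition Ieps {X Y : lmodType k} (eps : Y -> k) : tens X Y -> X :=
  tl (fun x y => eps y *: x).
Definition tensmul {X Y : lmodType k} (mX : X -> X -> X) (mY : Y -> Y -> Y)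
  (x y : tens X Y) : tens X Y :=
  tl (fun a b => tl (fun c d => tm (mX a c) (mY b d)) y) x.

Definition is_algebra (X : lmodType k) (m : X -> X -> X) (one : X) :=
  [/\ bilin m, (forall x y z, m (m x y) z = m x (m y z)),
      (forall x, m one x = x) & (forall x, m x one = x)].

Definition is_coalgebra (X : lmodType k) (D : X -> tens X X) (eps : X -> k) :=
  [/\ lin D, lin_scal eps,
      (forall x, tassoc (tmap D id (D x)) = tmap id D (D x)),
      (forall x, epsI eps (D x) = x) & (forall x, Ieps eps (D x) = x)].

Definition is_bialgebra (H : lmodType k) (m : H -> H -> H) (one : H)
  (D : H -> tens H H) (eps : H -> k) :=
  [/\ is_algebra m one, is_coalgebra D eps,
      (forall h g, D (m h g) = tensmul m m (D h) (D g)),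
      D one = tm one one &
      (forall h g, eps (m h g) = eps h * eps g) /\ eps one = 1].

Definition is_antipode (H : lmodType k) (m : H -> H -> H) (one : H)
  (D : H -> tens H H) (eps : H -> k) (S : H -> H) :=
  [/\ lin S,
      (forall h, tl (fun a b => m (S a) b) (D h) = eps h *: one) &
      (forall h, tl (fun a b => m a (S b)) (D h) = eps h *: one)].

Definition is_hopf (H : lmodType k) (m : H -> H -> H) (one : H)
  (D : H -> tens H H) (eps : H -> k) :=
  is_bialgebra m one D eps /\ exists S : H -> H, is_antipode m one D eps S.

Definition is_comod_alg (H A : lmodType k) (mH : H -> H -> H) (oneH : H)
  (DH : H -> tens H H) (epsH : H -> k)
  (mA : A -> A -> A) (oneA : A) (rhoA : A -> tens H A) :=
  [/\ is_algebra mA oneA, lin rhoA,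
      (forall a, tassoc (tmap DH id (rhoA a)) = tmap id rhoA (rhoA a)),
      (forall a, epsI epsH (rhoA a) = a) &
      (forall a b, rhoA (mA a b) = tensmul mH mA (rhoA a) (rhoA b))
      /\ rhoA oneA = tm oneH oneA].

Definition is_mod_coalg (H C : lmodType k) (mH : H -> H -> H) (oneH : H)
  (DH : H -> tens H H) (epsH : H -> k)
  (actC : C -> H -> C) (DC : C -> tens C C) (epsC : C -> k) :=
  [/\ is_coalgebra DC epsC, bilin actC,
      (forall c h g, actC (actC c h) g = actC c (mH h g)) /\
      (forall c, actC c oneH = c),
      (forall c h, DC (actC c h) =
          tl (fun c1 c2 => tl (fun h1 h2 => tm (actC c1 h1) (actC c2 h2)) (DH h))
             (DC c)) &
      (forall c h, epsC (actC c h) = epsC c * epsH h)].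

Definition flat (C : lmodType k) :=
  forall (U V : lmodType k) (f : U -> V), lin f -> injective f ->
    injective (tmap (@id C) f).

Section DoiHopf.
Variables (H A C : lmodType k).
Variables (mH : H -> H -> H) (oneH : H) (DH : H -> tens H H) (epsH : H -> k).
Variables (mA : A -> A -> A) (oneA : A) (rhoA : A -> tens H A).
Variables (actC : C -> H -> C) (DC : C -> tens C C) (epsC : C -> k).

Definition DH_datum :=
  [/\ is_bialgebra mH oneH DH epsH,
      is_comod_alg mH oneH DH epsH mA oneA rhoA,
      is_mod_coalg mH oneH DH epsH actC DC epsC & flat C].

Definition is_rmod (M : lmodType k) (act : M -> A -> M) :=
  [/\ bilin act, (forall m a b, act (act m a) b = act m (mA a b)) &
      (forall m, act m oneA = m)].

Definition is_DHmod (M : lmodType k) (act : M -> A -> M) (rho : M -> tens C M) :=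
  [/\ is_rmod act, lin rho,
      (forall m, tassoc (tmap DC id (rho m)) = tmap id rho (rho m)),
      (forall m, epsI epsC (rho m) = m) &
      (forall m a, rho (act m a) =
         tl (fun c m0 => tl (fun h a0 => tm (actC c h) (act m0 a0)) (rhoA a)) (rho m))].

Definition is_Amorph (M N : lmodType k) (actM : M -> A -> M) (actN : N -> A -> N)
  (f : M -> N) := lin f /\ forall m a, f (actM m a) = actN (f m) a.

Definition is_morph (M N : lmodType k) (actM : M -> A -> M) (rhoM : M -> tens C M)
  (actN : N -> A -> N) (rhoN : N -> tens C N) (f : M -> N) :=
  is_Amorph actM actN f /\ forall m, rhoN (f m) = tmap id f (rhoM m).

(* the right adjoint G(N) = C (x) N *)
Definition actG (N : lmodType k) (actN : N -> A -> N) (x : tens C N) (a : A)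
  : tens C N :=
  tl (fun c n => tl (fun h a0 => tm (actC c h) (actN n a0)) (rhoA a)) x.
Definition coactG (N : lmodType k) : tens C N -> tens C (tens C N) :=
  tl (fun c n => tl (fun c1 c2 => tm c1 (tm c2 n)) (DC c)).

(* families indexed by (raw) objects: nu_M : GF(M) -> M.
   Only their values at genuine Doi-Hopf modules matter. *)
Definition natfam :=
  forall (M : lmodType k), (M -> A -> M) -> (M -> tens C M) -> tens C M -> M.

Definition is_nat (nu : natfam) :=
  (forall (M : lmodType k) actM rhoM, is_DHmod actM rhoM ->
     is_morph (actG actM) (@coactG M) actM rhoM (nu M actM rhoM)) /\
  (forall (M : lmodType k) actM rhoM (N : lmodType k) actN rhoN (f : M -> N),
     is_DHmod actM rhoM -> is_DHmod actN rhoN -> is_morph actM rhoM actN rhoN f ->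
     forall x, f (nu M actM rhoM x) = nu N actN rhoN (tmap id f x)).

Definition actCA := actG mA.
Definition coactCA := @coactG A.
Definition actCCA := actG actCA.
Definition coactCCA := @coactG (tens C A).

Definition Phi (nu : natfam) : tens C (tens C A) -> tens C A :=
  nu (tens C A) actCA coactCA.

Definition inV1 (nu : tens C (tens C A) -> tens C A) :=
  [/\ is_morph actCCA coactCCA actCA coactCA nu,
      (forall c d a b, nu (tm c (tm d (mA b a))) = tmap id (mA b) (nu (tm c (tm d a)))) &
      (forall c d,
         let theta := fun d' => epsI epsC (nu (tm c (tm d' oneA))) in
         tl (fun d1 d2 => tl (fun h a0 => tm (actC d2 h) a0) (rhoA (theta d1))) (DC d)
         = nu (tm c (tm d oneA)))].

Definition normalized (nu : tens C (tens C A) -> tens C A) :=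
  forall c a, tl (fun c1 c2 => nu (tm c1 (tm c2 a))) (DC c) = tm c a.

Definition Psi (nu : tens C (tens C A) -> tens C A) : natfam :=
  fun M actM rhoM =>
    tl (fun c m => tl (fun d m0 => actM m0 (epsI epsC (nu (tm c (tm d oneA)))))
                      (rhoM m)).

Definition F_separable :=
  exists P : forall (M N : lmodType k) (actM : M -> A -> M) (rhoM : M -> tens C M)
                    (actN : N -> A -> N) (rhoN : N -> tens C N), (M -> N) -> M -> N,
  forall (M N : lmodType k) actM rhoM actN rhoN,
    is_DHmod actM rhoM -> is_DHmod actN rhoN ->
    [/\ (forall f, is_Amorph actM actN f ->
           is_morph actM rhoM actN rhoN (P M N actM rhoM actN rhoN f)),
        (forall f, is_morph actM rhoM actN rhoN f ->
           forall m, P M N actM rhoM actN rhoN f m = f m) &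
        (forall (M' : lmodType k) actM' rhoM' (N' : lmodType k) actN' rhoN' (g : M' -> M) (h : N -> N') f,
           is_DHmod actM' rhoM' -> is_DHmod actN' rhoN' ->
           is_morph actM' rhoM' actM rhoM g -> is_morph actN rhoN actN' rhoN' h ->
           is_Amorph actM actN f ->
           forall m, P M' N' actM' rhoM' actN' rhoN' (fun x => h (f (g x))) m
                     = h (P M N actM rhoM actN rhoN f (g m)))].

End DoiHopf.
End Tensor.

(* A natural transformation nu : GF -> 1 is determined by its component at
   C (x) A: naturality along the unit rho_M : M -> GF M (a morphism of Doi-Hopf
   modules) and along G of the A-linear maps c (x) a |-> c (x) m a expresses
   nu_M through nu_{C (x) A}, which is the formula Psi.  Conversely, for nu in
   V_1, condition (i) makes Psi nu A-linear and condition (ii) makes it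
   C-colinear.  The separability criterion is Rafael's theorem for the
   adjunction F -| G, whose unit is the coaction: F is separable iff the unit
   has a natural left inverse, and under the correspondence these are exactly
   the normalized elements of V_1.  Tensor products are known only through
   their universal property, so every identity is checked on pure tensors. *)
From mathcomp Require Import all_boot all_algebra.
From Stdlib Require Import FunctionalExtensionality.
Set Implicit Arguments. Unset Strict Implicit. Unset Printing Implicit Defensive.
Import GRing.Theory.
Local Open Scope ring_scope.

Section LinearMaps.
Variable k : comPzRingType.

Lemma linD (U V : lmodType k) (f : U -> V) : lin f -> forall x y, f (x + y) = f x + f y.
Proof. by case. Qed.

Lemma linZ (U V : lmodType k) (f : U -> V) : lin f -> forall a x, f (a *: x) = a *: f x.
Proof. by case. Qed.

Lemma lin_id (U : lmodType k) : lin (fun x : U => x).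
Proof. by []. Qed.

Lemma lin_comp (U V W : lmodType k) (g : V -> W) (h : U -> V) :
  lin g -> lin h -> lin (fun x => g (h x)).
Proof. by move=> [gD gZ] [hD hZ]; split=> *; rewrite ?hD ?gD ?hZ ?gZ. Qed.

Lemma lin_add (U V : lmodType k) (f g : U -> V) :
  lin f -> lin g -> lin (fun x => f x + g x).
Proof.
move=> [fD fZ] [gD gZ]; split=> *; rewrite ?fD ?gD ?fZ ?gZ; first by rewrite addrACA.
by rewrite scalerDr.
Qed.

Lemma lin_scale (U V : lmodType k) (a : k) (f : U -> V) :
  lin f -> lin (fun x => a *: f x).
Proof.
by move=> [fD fZ]; split=> *; rewrite ?fD ?fZ ?scalerDr // !scalerA mulrC.
Qed.

Lemma lin_scal_scale (U V W : lmodType k) (s : V -> k) (h : U -> V) (w : W) :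
  lin_scal s -> lin h -> lin (fun x => s (h x) *: w).
Proof. by move=> [sD sZ] [hD hZ]; split=> *; rewrite ?hD ?sD ?hZ ?sZ ?scalerDl ?scalerA. Qed.

Lemma bilin_linl (U V W : lmodType k) (f : U -> V -> W) v : bilin f -> lin (f^~ v).
Proof. by case. Qed.

Lemma bilin_linr (U V W : lmodType k) (f : U -> V -> W) u : bilin f -> lin (f u).
Proof. by case. Qed.

Lemma lin_bilinl_comp (U V W X : lmodType k) (f : U -> V -> W) (h : X -> U) (v : V) :
  bilin f -> lin h -> lin (fun x => f (h x) v).
Proof. by move=> fb hl; exact: (lin_comp (bilin_linl v fb) hl). Qed.

End LinearMaps.

Section TensorCalculus.
Variable k : comPzRingType.
Variable T : tensor_provider k.

Lemma tm_bilin (U V : lmodType k) : bilin (@tm k T U V).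
Proof. exact: tmul_bilin. Qed.

Lemma tlE (U V W : lmodType k) (f : U -> V -> W) u v :
  bilin f -> tl f (tm T u v) = f u v.
Proof. by move=> fb; apply: (tlift_tmul (T U V) fb). Qed.

Lemma tl_lin (U V W : lmodType k) (f : U -> V -> W) : bilin f -> lin (tl (T:=T) f).
Proof. by move=> fb; apply: (tlift_lin (T U V) fb). Qed.

Lemma tens_ext (U V W : lmodType k) (g h : tens T U V -> W) :
  lin g -> lin h -> (forall u v, g (tm T u v) = h (tm T u v)) -> forall x, g x = h x.
Proof. exact: tens_uniq. Qed.

Lemma eq_tl (U V W : lmodType k) (f g : U -> V -> W) x :
  (forall u v, f u v = g u v) -> tl (T:=T) f x = tl g x.
Proof.
by move=> e; congr tl; apply: functional_extensionality => u;
  apply: functional_extensionality.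
Qed.

Lemma lin_tl_family (X U V W : lmodType k) (F : X -> U -> V -> W) z :
  (forall x, bilin (F x)) -> (forall u v, lin (fun x => F x u v)) ->
  lin (fun x => tl (T:=T) (F x) z).
Proof.
move=> Fb Fl; split=> [x y|a x].
  apply: (tens_ext (g := fun z => tl (F (x + y)) z)
                   (h := fun z => tl (F x) z + tl (F y) z)).
  - exact: tl_lin.
  - apply: lin_add; exact: tl_lin.
  by move=> u v; rewrite !tlE //; exact: (linD (Fl u v)).
apply: (tens_ext (g := fun z => tl (F (a *: x)) z) (h := fun z => a *: tl (F x) z)).
- exact: tl_lin.
- apply: lin_scale; exact: tl_lin.
by move=> u v; rewrite !tlE //; exact: (linZ (Fl u v)).
Qed.

End TensorCalculus.

Ltac unfold_DH :=
  unfold actCCA, coactCCA, actCA, coactCA, tmap, epsI, Ieps, tassoc, tensmul, actG, coactG.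

(* Proves linearity of maps built from tensor lifts, tensors, compositions,
   sums and scalings of (bi)linear data available in the context. *)
Ltac lin_t :=
  cbv beta;
  match goal with
  | |- bilin _ => split; [intro; lin_t | intro; lin_t]
  | |- lin_scal _ => assumption
  | |- lin (fun x => x) => exact: lin_id
  | |- lin (fun x => @?f x + @?g x) => apply: lin_add; [lin_t | lin_t]
  | |- lin (fun x => ?a *: @?f x) => apply: lin_scale; lin_t
  | |- lin (fun x => ?s (@?h x) *: ?w) => apply: lin_scal_scale; [assumption | lin_t]
  | |- lin (fun x => ?g (@?h x)) => apply: (lin_comp (g := g)); [lin_atom | lin_t]
  | |- lin (fun x => tl (@?F x) ?z) => apply: lin_tl_family; [intro; lin_t | intros; lin_t]
  | |- lin (fun x => ?g (@?h x) ?w) => apply: (lin_bilinl_comp (f := g)); [bilin_atom | lin_t]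
  | |- lin _ => lin_atom
  end
with lin_atom :=
  cbv beta;
  first [ assumption
        | exact: lin_id
        | apply: tl_lin; lin_t
        | lazymatch goal with
          | |- lin (fun x => _) => lin_t
          | |- lin (?f ?u) => apply: (bilin_linr (f := f)); bilin_atom
          end ]
with bilin_atom :=
  first [ assumption | exact: tm_bilin
        | lazymatch goal with |- bilin (fun _ _ => _) => lin_t end ].

Ltac linearity := intros; try unfold_DH; lin_t.
Ltac tl_simpl := repeat (rewrite tlE; [|linearity]).

Section TensorIdentities.
Variable k : comPzRingType.
Variable T : tensor_provider k.

Lemma tl_postcomp (U V W W' : lmodType k) (L : W -> W') (f : U -> V -> W) x :
  lin L -> bilin f -> L (tl (T:=T) f x) = tl (fun u v => L (f u v)) x.
Proof.
move=> Ll fb.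
apply: (tens_ext (g := fun x => L (tl f x)) (h := tl (fun u v => L (f u v))));
  [linearity | linearity |].
by move=> u v; rewrite !tlE //; linearity.
Qed.

Lemma tl_exchange (U V U' V' W : lmodType k) (F : U -> V -> U' -> V' -> W) x y :
  (forall u v, bilin (F u v)) -> (forall u' v', bilin (fun u v => F u v u' v')) ->
  tl (T:=T) (fun u v => tl (T:=T) (fun u' v' => F u v u' v') y) x
  = tl (fun u' v' => tl (fun u v => F u v u' v') x) y.
Proof.
move=> F1 F2.
have L1 u' v' v : lin (fun u => F u v u' v') by case: (F2 u' v').
have L2 u' v' u : lin (fun v => F u v u' v') by case: (F2 u' v').
have L3 u v v' : lin (fun u' => F u v u' v') by case: (F1 u v).
have L4 u v u' : lin (fun v' => F u v u' v') by case: (F1 u v).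
have B1 : bilin (fun u v => tl (T:=T) (fun u' v' => F u v u' v') y).
  by split=> [v|u]; apply: lin_tl_family.
have B2 z : bilin (fun u' v' => tl (T:=T) (fun u v => F u v u' v') z).
  by split=> [v'|u']; apply: lin_tl_family.
apply: (tens_ext (g := tl (fun u v => tl (T:=T) (fun u' v' => F u v u' v') y))
                 (h := fun x => tl (fun u' v' => tl (fun u v => F u v u' v') x) y)).
- exact: tl_lin.
- by apply: lin_tl_family => // u' v'; apply: tl_lin.
by move=> u v; rewrite tlE //; apply: eq_tl => u' v'; rewrite tlE.
Qed.

Lemma coassoc_tl (X M W : lmodType k) (D : X -> tens T X X) (rho : M -> tens T X M) m
  (F : X -> X -> M -> W) :
  lin D -> lin rho ->
  tassoc (tmap D id (rho m)) = tmap id rho (rho m) ->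
  (forall c2 m0, lin (fun c1 => F c1 c2 m0)) -> (forall c1 m0, lin (fun c2 => F c1 c2 m0)) ->
  (forall c1 c2, lin (F c1 c2)) ->
  tl (fun c m0 => tl (fun c1 c2 => F c1 c2 m0) (D c)) (rho m)
  = tl (fun c1 y => tl (fun c2 m0 => F c1 c2 m0) (rho y)) (rho m).
Proof.
move=> Dl rl co F1 F2 F3.
have Fb c1 : bilin (fun c2 m0 => F c1 c2 m0) by split.
pose L := tl (T:=T) (fun c1 (t : tens T X M) => tl (fun c2 m0 => F c1 c2 m0) t).
have Lb : bilin (fun c1 (t : tens T X M) => tl (T:=T) (fun c2 m0 => F c1 c2 m0) t).
  by split=> [t|c1]; [apply: lin_tl_family | apply: tl_lin].
have Ll : lin L by apply: tl_lin.
have -> : tl (fun c m0 => tl (fun c1 c2 => F c1 c2 m0) (D c)) (rho m)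
          = L (tassoc (tmap D id (rho m))).
  rewrite /tassoc /tmap (tl_postcomp (L := tl (fun x w => tl (fun u v => tm T u (tm T v w)) x)));
    [|lin_t|lin_t].
  rewrite (tl_postcomp (L := L)) //; last lin_t.
  apply: eq_tl => c m0; rewrite tlE; last lin_t.
  rewrite (tl_postcomp (L := L)) //; last lin_t.
  by apply: eq_tl => c1 c2; rewrite /L !tlE.
rewrite co /tmap (tl_postcomp (L := L)) //; last lin_t.
by apply: eq_tl => c y; rewrite /L tlE.
Qed.

Lemma counitl_tl (X M W : lmodType k) (eps : X -> k) (rho : M -> tens T X M) m (G : M -> W) :
  lin_scal eps -> lin G -> epsI eps (rho m) = m ->
  tl (T:=T) (fun c m0 => eps c *: G m0) (rho m) = G m.
Proof.
move=> el Gl e; rewrite -{2}e /epsI (tl_postcomp (L := G)) //; last lin_t.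
by apply: eq_tl => c m0; rewrite (linZ Gl).
Qed.

Lemma counitr_tl (X W : lmodType k) (eps : X -> k) (D : X -> tens T X X) c (G : X -> W) :
  lin_scal eps -> lin G -> Ieps eps (D c) = c ->
  tl (T:=T) (fun c1 c2 => eps c2 *: G c1) (D c) = G c.
Proof.
move=> el Gl e; rewrite -{2}e /Ieps (tl_postcomp (L := G)) //; last lin_t.
by apply: eq_tl => c1 c2; rewrite (linZ Gl).
Qed.

Lemma tmap_id (X N : lmodType k) (y : tens T X N) : tmap id (fun x => x) y = y.
Proof.
apply: (tens_ext (g := tmap id (fun x => x)) (h := id)); [linearity | linearity |].
by move=> u v; rewrite /tmap; tl_simpl.
Qed.

Lemma tmap_comp (X N1 N2 N3 : lmodType k) (f : N1 -> N2) (g : N2 -> N3) (y : tens T X N1) :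
  lin f -> lin g -> tmap id (fun x => g (f x)) y = tmap id g (tmap id f y).
Proof.
move=> fl gl.
apply: (tens_ext (g := tmap id (fun x => g (f x))) (h := fun y => tmap id g (tmap id f y)));
  [linearity | linearity |].
by move=> u v; rewrite /tmap; tl_simpl.
Qed.

Lemma epsI_tmap (X N N' : lmodType k) (eps : X -> k) (f : N -> N') (y : tens T X N) :
  lin_scal eps -> lin f -> epsI eps (tmap id f y) = f (epsI eps y).
Proof.
move=> el fl.
apply: (tens_ext (g := fun y => epsI eps (tmap id f y)) (h := fun y => f (epsI eps y)));
  [linearity | linearity |].
by move=> c n; rewrite /epsI /tmap; tl_simpl; rewrite /id (linZ fl).
Qed.

Lemma tm_tl (X Y Z : lmodType k) (c : X) (y : tens T Y Z) :
  tm T c y = tl (fun d m0 => tm T c (tm T d m0)) y.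
Proof.
apply: (tens_ext (g := tm T c) (h := tl (fun d m0 => tm T c (tm T d m0))));
  [linearity | linearity |].
by move=> u v; tl_simpl.
Qed.

End TensorIdentities.
Section DoiHopfModules.
Variable k : comPzRingType.
Variable T : tensor_provider k.
Variables (H A C : lmodType k).
Variables (mH : H -> H -> H) (oneH : H) (DH : H -> tens T H H) (epsH : H -> k).
Variables (mA : A -> A -> A) (oneA : A) (rhoA : A -> tens T H A).
Variables (actC : C -> H -> C) (DC : C -> tens T C C) (epsC : C -> k).
Hypothesis mHb : bilin mH.
Hypothesis DHl : lin DH.
Hypothesis epsHl : lin_scal epsH.
Hypothesis mAb : bilin mA.
Hypothesis mA_assoc : forall x y z, mA (mA x y) z = mA x (mA y z).
Hypothesis mA_1l : forall x, mA oneA x = x.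
Hypothesis mA_1r : forall x, mA x oneA = x.
Hypothesis rhoAl : lin rhoA.
Hypothesis rhoA_co : forall a, tassoc (tmap DH id (rhoA a)) = tmap id rhoA (rhoA a).
Hypothesis rhoA_eps : forall a, epsI epsH (rhoA a) = a.
Hypothesis rhoA_mul : forall a b, rhoA (mA a b) = tensmul mH mA (rhoA a) (rhoA b).
Hypothesis rhoA_one : rhoA oneA = tm T oneH oneA.
Hypothesis DCl : lin DC.
Hypothesis epsCl : lin_scal epsC.
Hypothesis DC_co : forall x, tassoc (tmap DC id (DC x)) = tmap id DC (DC x).
Hypothesis DC_epsI : forall x, epsI epsC (DC x) = x.
Hypothesis DC_Ieps : forall x, Ieps epsC (DC x) = x.
Hypothesis actCb : bilin actC.
Hypothesis actC_assoc : forall c h g, actC (actC c h) g = actC c (mH h g).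
Hypothesis actC_1 : forall c, actC c oneH = c.
Hypothesis DC_act : forall c h, DC (actC c h) =
  tl (fun c1 c2 => tl (fun h1 h2 => tm T (actC c1 h1) (actC c2 h2)) (DH h)) (DC c).
Hypothesis epsC_act : forall c h, epsC (actC c h) = epsC c * epsH h.

Lemma rhoA_coassoc_tl (W : lmodType k) (F : H -> H -> A -> W) a :
  (forall c2 m0, lin (fun c1 => F c1 c2 m0)) -> (forall c1 m0, lin (fun c2 => F c1 c2 m0)) ->
  (forall c1 c2, lin (F c1 c2)) ->
  tl (fun h a0 => tl (fun h1 h2 => F h1 h2 a0) (DH h)) (rhoA a)
  = tl (fun h1 y => tl (fun h2 a0 => F h1 h2 a0) (rhoA y)) (rhoA a).
Proof. by move=> *; apply: coassoc_tl. Qed.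

Lemma DC_coassoc_tl (W : lmodType k) (F : C -> C -> C -> W) c :
  (forall c2 m0, lin (fun c1 => F c1 c2 m0)) -> (forall c1 m0, lin (fun c2 => F c1 c2 m0)) ->
  (forall c1 c2, lin (F c1 c2)) ->
  tl (fun c0 m0 => tl (fun c1 c2 => F c1 c2 m0) (DC c0)) (DC c)
  = tl (fun c1 y => tl (fun c2 m0 => F c1 c2 m0) (DC y)) (DC c).
Proof. by move=> *; apply: coassoc_tl. Qed.

Section RightAdjoint.
Variables (N : lmodType k) (actN : N -> A -> N).
Hypothesis actNb : bilin actN.
Hypothesis actN_assoc : forall m a b, actN (actN m a) b = actN m (mA a b).
Hypothesis actN_1 : forall m, actN m oneA = m.

Lemma actG_tm c n a : actG rhoA actC actN (tm T c n) a
  = tl (fun h a0 => tm T (actC c h) (actN n a0)) (rhoA a).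
Proof. by rewrite /actG tlE //; linearity. Qed.

Lemma actG_rmod : is_rmod mA oneA (actG rhoA actC actN).
Proof.
split; first linearity.
- move=> x a b.
  apply: (tens_ext (g := fun x => actG rhoA actC actN (actG rhoA actC actN x a) b)
                   (h := fun x => actG rhoA actC actN x (mA a b))); [linearity | linearity |].
  move=> c n; rewrite !actG_tm rhoA_mul /tensmul.
  rewrite (tl_postcomp (L := fun y => actG rhoA actC actN y b)); [|linearity|linearity].
  rewrite (tl_postcomp (L := tl (fun h a0 => tm T (actC c h) (actN n a0)))); [|linearity|linearity].
  apply: eq_tl => h1 a1; rewrite actG_tm.
  rewrite (tl_postcomp (L := tl (fun h a0 => tm T (actC c h) (actN n a0)))); [|linearity|linearity].
  by apply: eq_tl => h2 a2; rewrite tlE ?actC_assoc ?actN_assoc //; linearity.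
- move=> x; apply: (tens_ext (g := fun x => actG rhoA actC actN x oneA) (h := id));
    [linearity | exact: lin_id |].
  by move=> c n; rewrite actG_tm rhoA_one tlE ?actC_1 ?actN_1 //; linearity.
Qed.

Lemma coactG_tm (c : C) (n : N) :
  coactG DC (tm T c n) = tl (fun c1 c2 => tm T c1 (tm T c2 n)) (DC c).
Proof. by rewrite /coactG tlE //; linearity. Qed.

Lemma coactG_coassoc (x : tens T C N) :
  tassoc (tmap DC id (coactG DC x)) = tmap id (coactG DC (N:=N)) (coactG DC x).
Proof.
apply: (tens_ext (g := fun x => tassoc (tmap DC id (coactG DC x)))
                 (h := fun x => tmap id (coactG DC (N:=N)) (coactG DC (N:=N) x)));
  [linearity | linearity |].
move=> c n; rewrite coactG_tm /tassoc /tmap.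
rewrite (tl_postcomp (L := tl (fun c1 y => tm T (DC c1) (id y)))); [|linearity|linearity].
rewrite (tl_postcomp (L := tl (fun x w => tl (fun u v => tm T u (tm T v w)) x)));
  [|linearity|linearity].
rewrite (tl_postcomp (L := tl (fun c1 y => tm T (id c1) (coactG DC y)))); [|linearity|linearity].
transitivity (tl (fun c0 m0 => tl (fun c1 c2 => tm T c1 (tm T c2 (tm T m0 n))) (DC c0)) (DC c)).
  by apply: eq_tl => c1 c2; tl_simpl.
rewrite DC_coassoc_tl; [|linearity|linearity|linearity].
apply: eq_tl => c1 y; rewrite tlE; [|linearity].
by rewrite /id coactG_tm (tl_postcomp (L := tm T c1)); [|linearity|linearity].
Qed.

Lemma coactG_counit x : epsI epsC (coactG DC (N:=N) x) = x.
Proof.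
apply: (tens_ext (g := fun x => epsI epsC (coactG DC (N:=N) x)) (h := id));
  [linearity | linearity |].
move=> c n; rewrite coactG_tm /epsI.
rewrite (tl_postcomp (L := tl (fun x y => epsC x *: y))); [|linearity|linearity].
rewrite -[RHS](counitl_tl (eps := epsC) (rho := DC) (m := c) (G := fun c2 => tm T c2 n)) //;
  last linearity.
by apply: eq_tl => c1 c2; rewrite tlE //; linearity.
Qed.

Lemma coactG_counitr (z : tens T C N) : tmap id (epsI epsC) (coactG DC z) = z.
Proof.
apply: (tens_ext (g := fun z => tmap id (epsI epsC) (coactG DC (N:=N) z)) (h := id));
  [linearity | linearity |].
move=> c n; rewrite coactG_tm /tmap (tl_postcomp (L := tl _)); [|linearity|linearity].
rewrite -[RHS](counitr_tl (eps := epsC) (D := DC) (c := c) (G := fun c1 => tm T c1 n)) //;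
  last linearity.
apply: eq_tl => c1 c2; rewrite /epsI; tl_simpl.
by rewrite /id (linZ (bilin_linr _ (tm_bilin _ _ _))).
Qed.

Lemma coactG_actG (x : tens T C N) a : coactG DC (actG rhoA actC actN x a) =
  tl (fun c m0 => tl (fun h a0 => tm T (actC c h) (actG rhoA actC actN m0 a0)) (rhoA a))
     (coactG DC x).
Proof.
apply: (tens_ext (g := fun x => coactG DC (actG rhoA actC actN x a))
  (h := fun x => tl (fun c m0 => tl (fun h a0 => tm T (actC c h) (actG rhoA actC actN m0 a0))
                                    (rhoA a)) (coactG DC x))); [linearity | linearity |].
move=> c n.
transitivity (tl (fun h a0 => tl (fun c1 c2 => tl (fun h1 h2 =>
    tm T (actC c1 h1) (tm T (actC c2 h2) (actN n a0))) (DH h)) (DC c)) (rhoA a)).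
  rewrite actG_tm (tl_postcomp (L := coactG DC (N:=N))); [|linearity|linearity].
  apply: eq_tl => h a0; rewrite coactG_tm DC_act.
  rewrite (tl_postcomp (L := tl (fun c1 c2 => tm T c1 (tm T c2 (actN n a0)))));
    [|linearity|linearity].
  apply: eq_tl => c1 c2.
  rewrite (tl_postcomp (L := tl (fun c1 c2 => tm T c1 (tm T c2 (actN n a0)))));
    [|linearity|linearity].
  by apply: eq_tl => h1 h2; rewrite tlE //; linearity.
rewrite tl_exchange; [|linearity|linearity].
rewrite coactG_tm (tl_postcomp (L := tl _)); [|linearity|linearity].
apply: eq_tl => c1 c2; rewrite tlE; [|linearity].
rewrite rhoA_coassoc_tl; [|linearity|linearity|linearity].
apply: eq_tl => h y.
by rewrite actG_tm (tl_postcomp (L := tm T (actC c1 h))); [|linearity|linearity].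
Qed.

Lemma G_DHmod : is_DHmod mA oneA rhoA actC DC epsC (actG rhoA actC actN) (coactG DC (N:=N)).
Proof.
split; [exact: actG_rmod | linearity | exact: coactG_coassoc | exact: coactG_counit |].
exact: coactG_actG.
Qed.

End RightAdjoint.

Lemma G_morph (N N' : lmodType k) (actN : N -> A -> N) (actN' : N' -> A -> N') (f : N -> N') :
  bilin actN -> bilin actN' -> is_Amorph actN actN' f ->
  is_morph (actG rhoA actC actN) (coactG DC (N:=N)) (actG rhoA actC actN') (coactG DC (N:=N'))
    (tmap id f).
Proof.
move=> actNb actN'b [fl fA]; split; [split|].
- linearity.
- move=> x a.
  apply: (tens_ext (g := fun x => tmap id f (actG rhoA actC actN x a))
                   (h := fun x => actG rhoA actC actN' (tmap id f x) a)); [linearity|linearity|].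
  move=> c n; rewrite actG_tm // /tmap; tl_simpl; rewrite actG_tm //.
  rewrite (tl_postcomp (L := tl _)); [|linearity|linearity].
  by apply: eq_tl => h a0; tl_simpl; rewrite fA.
- move=> x.
  apply: (tens_ext (g := fun x => coactG DC (tmap id f x))
                   (h := fun x => tmap id (tmap id f) (coactG DC (N:=N) x)));
    [linearity|linearity|].
  move=> c n; rewrite /tmap; tl_simpl.
  rewrite !coactG_tm (tl_postcomp (L := tl _)); [|linearity|linearity].
  by apply: eq_tl => c1 c2; tl_simpl.
Qed.

Lemma epsI_actG (N : lmodType k) (actN : N -> A -> N) (y : tens T C N) a :
  bilin actN -> epsI epsC (actG rhoA actC actN y a) = actN (epsI epsC y) a.
Proof.
move=> actNb.
apply: (tens_ext (g := fun y => epsI epsC (actG rhoA actC actN y a))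
                 (h := fun y => actN (epsI epsC y) a)); [linearity|linearity|].
move=> c n; rewrite actG_tm // /epsI; tl_simpl.
rewrite (tl_postcomp (L := tl (fun x y => epsC x *: y))); [|linearity|linearity].
transitivity (epsC c *: actN n (tl (fun h a0 => epsH h *: a0) (rhoA a))).
  rewrite (tl_postcomp (L := fun z => epsC c *: actN n z)); [|linearity|linearity].
  apply: eq_tl => h a0; tl_simpl.
  by rewrite epsC_act -scalerA (linZ (bilin_linr _ actNb)).
by have := rhoA_eps a; rewrite /epsI => ->; rewrite (linZ (proj1 actNb a)).
Qed.

Lemma epsI_Amorph (N : lmodType k) (actN : N -> A -> N) :
  bilin actN -> is_Amorph (actG rhoA actC actN) actN (epsI epsC (Y:=N)).
Proof. by move=> actNb; split; [linearity | move=> m a; apply: epsI_actG]. Qed.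

Lemma coactG_tassoc (N : lmodType k) (x : tens T C N) :
  coactG DC x = tassoc (tmap DC id x).
Proof.
apply: (tens_ext (g := coactG DC (N:=N)) (h := fun x => tassoc (tmap DC id x)));
  [linearity|linearity|].
by move=> c n; rewrite coactG_tm /tassoc /tmap; tl_simpl.
Qed.

Lemma coact_morph (M : lmodType k) (actM : M -> A -> M) (rhoM : M -> tens T C M) :
  is_DHmod mA oneA rhoA actC DC epsC actM rhoM ->
  is_morph actM rhoM (actG rhoA actC actM) (coactG DC (N:=M)) rhoM.
Proof.
case=> _ rhoMl rhoMco _ rhoMcomp; split; [split|] => //.
by move=> m; rewrite coactG_tassoc rhoMco.
Qed.

Lemma actCA_rmod : is_rmod mA oneA (actCA mA rhoA actC).
Proof. exact: actG_rmod. Qed.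

Lemma CA_DHmod : is_DHmod mA oneA rhoA actC DC epsC (actCA mA rhoA actC) (coactCA DC).
Proof. exact: G_DHmod. Qed.

Lemma act_Amorph (N : lmodType k) (actN : N -> A -> N) (n : N) :
  is_rmod mA oneA actN -> is_Amorph mA actN (actN n).
Proof. by case=> b a1 a2; split; [exact: bilin_linr | move=> a0 b0; rewrite a1]. Qed.

Lemma mA_Amorph b : is_Amorph mA mA (mA b).
Proof. by split; [exact: bilin_linr | move=> a0 b0; rewrite mA_assoc]. Qed.

Section NaturalTransformation.
Variable nu : natfam T A C.
Arguments nu : clear implicits.
Hypothesis Hnu : is_nat mA oneA rhoA actC DC epsC nu.

Lemma nat_morph (M : lmodType k) actM rhoM : is_DHmod mA oneA rhoA actC DC epsC actM rhoM ->
  is_morph (actG rhoA actC actM) (coactG DC (N:=M)) actM rhoM (nu M actM rhoM).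
Proof. by case: Hnu => nu_morph _; apply: nu_morph. Qed.

Lemma nat_lin (M : lmodType k) actM rhoM : is_DHmod mA oneA rhoA actC DC epsC actM rhoM ->
  lin (nu M actM rhoM).
Proof. by move/nat_morph=> [[]]. Qed.

Lemma Phi_lin : lin (Phi mA rhoA actC DC nu).
Proof. exact: (nat_lin CA_DHmod). Qed.

(* Naturality along G of the A-linear map [a |-> n a]. *)
Lemma nat_G_tm (N : lmodType k) (actN : N -> A -> N) (n : N) c d :
  is_rmod mA oneA actN ->
  nu (tens T C N) (actG rhoA actC actN) (coactG DC (N:=N)) (tm T c (tm T d n))
  = tmap id (actN n) (Phi mA rhoA actC DC nu (tm T c (tm T d oneA))).
Proof.
move=> HN; have [actNb actNa actN1] := HN.
have G_actN := G_morph mAb actNb (act_Amorph n HN).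
case: Hnu => _ nu_nat.
rewrite /Phi (nu_nat _ _ _ _ _ _ _ CA_DHmod (G_DHmod actNb actNa actN1) G_actN).
by rewrite /tmap; tl_simpl; rewrite /id actN1.
Qed.

(* Naturality along the unit [rhoM : M -> G F M] reduces [nu_M] to [nu] on
   [G F M], which is determined by [Phi nu] through [nat_G_tm]. *)
Lemma Psi_Phi (M : lmodType k) actM rhoM :
  is_DHmod mA oneA rhoA actC DC epsC actM rhoM ->
  forall x, Psi oneA epsC (Phi mA rhoA actC DC nu) actM rhoM x = nu M actM rhoM x.
Proof.
move=> HM; have [[actMb actMa actM1] rhoMl _ rhoMeps _] := HM.
have nuMl := nat_lin HM.
have GM := G_DHmod actMb actMa actM1.
have nuGl := nat_lin GM.
have Phil := Phi_lin.
apply: (tens_ext (g := Psi oneA epsC (Phi mA rhoA actC DC nu) actM rhoM) (h := nu M actM rhoM));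
  [rewrite /Psi; linearity | done |].
move=> c m.
case: Hnu => _ nu_nat.
rewrite -[RHS]rhoMeps (nu_nat _ _ _ _ _ _ _ HM GM (coact_morph HM)).
rewrite /tmap [in RHS]tlE; [|linearity]; rewrite /id tm_tl.
rewrite (tl_postcomp (L := fun z => epsI epsC (nu _ (actG rhoA actC actM) (coactG DC (N:=M)) z)));
  [|linearity|linearity].
rewrite /Psi tlE; [|linearity].
apply: eq_tl => d m0.
rewrite nat_G_tm; last by split.
by rewrite epsI_tmap //; apply: bilin_linr.
Qed.

Lemma Phi_inV1 : inV1 mA oneA rhoA actC DC epsC (Phi mA rhoA actC DC nu).
Proof.
have Phil := Phi_lin.
split.
- exact: (nat_morph CA_DHmod).
- move=> c d a b.
  case: Hnu => _ nu_nat.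
  rewrite /Phi (nu_nat _ _ _ _ _ _ _ CA_DHmod CA_DHmod (G_morph mAb mAb (mA_Amorph b))).
  by rewrite /tmap; tl_simpl.
- move=> c d /=.
  rewrite -[RHS](Psi_Phi CA_DHmod) /Psi tlE; [|linearity].
  rewrite /coactCA coactG_tm (tl_postcomp (L := tl _)); [|linearity|linearity].
  apply: eq_tl => d1 d2; rewrite tlE; [|linearity].
  rewrite /actCA actG_tm //.
  by apply: eq_tl => h a0; rewrite mA_1l.
Qed.

Lemma normalized_Phi_iff :
  normalized DC (Phi mA rhoA actC DC nu) <->
  (forall (M : lmodType k) actM rhoM,
     is_DHmod mA oneA rhoA actC DC epsC actM rhoM ->
     forall m, nu M actM rhoM (rhoM m) = m).
Proof.
have Phil := Phi_lin.
split=> [Hn M actM rhoM HM m | Hr c a].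
- have [[actMb actMa actM1] rhoMl rhoMco rhoMeps _] := HM.
  rewrite -Psi_Phi // /Psi.
  rewrite -(coassoc_tl (D := DC) (rho := rhoM) (m := m)
     (F := fun c d m0 => actM m0 (epsI epsC (Phi mA rhoA actC DC nu (tm T c (tm T d oneA))))));
    [|linearity|linearity|exact: rhoMco|linearity|linearity|linearity].
  rewrite -[RHS]rhoMeps /epsI.
  apply: eq_tl => c m0.
  rewrite -(tl_postcomp (L := actM m0)); [|linearity|linearity].
  rewrite -(tl_postcomp (L := epsI epsC)); [|linearity|linearity].
  rewrite (Hn c oneA) /epsI tlE; [|linearity].
  by rewrite (linZ (bilin_linr _ actMb)) actM1.
- rewrite -[RHS](Hr _ _ _ CA_DHmod (tm T c a)) /coactCA coactG_tm.
  by rewrite (tl_postcomp (L := nu _ (actCA mA rhoA actC) (coactCA DC))); [|exact: Phil|linearity].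
Qed.

End NaturalTransformation.

Section FromV1.
Variable nu1 : tens T C (tens T C A) -> tens T C A.
Hypothesis H1 : inV1 mA oneA rhoA actC DC epsC nu1.
Local Notation theta c d := (epsI epsC (nu1 (tm T c (tm T d oneA)))).

Lemma V1_lin : lin nu1.
Proof. by case: H1 => [[[]]]. Qed.

Lemma V1_actA x a : nu1 (actCCA mA rhoA actC x a) = actCA mA rhoA actC (nu1 x) a.
Proof. by case: H1 => [[[_ e] _]] _ _; apply: e. Qed.

Lemma V1_coact x : coactCA DC (nu1 x) = tmap id nu1 (coactCCA DC x).
Proof. by case: H1 => [[_ e]] _ _; apply: e. Qed.

Lemma V1_mulA c d a b :
  nu1 (tm T c (tm T d (mA b a))) = tmap id (mA b) (nu1 (tm T c (tm T d a))).
Proof. by case: H1 => _ e _; apply: e. Qed.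

Lemma V1_theta c d :
  tl (fun d1 d2 => tl (fun h a0 => tm T (actC d2 h) a0) (rhoA (theta c d1))) (DC d)
  = nu1 (tm T c (tm T d oneA)).
Proof. by case: H1 => _ _ e; apply: e. Qed.

(* Colinearity of [nu1] recovers its first tensor factor from [theta]. *)
Lemma V1_tm_one c d :
  nu1 (tm T c (tm T d oneA)) = tl (fun c1 c2 => tm T c1 (theta c2 d)) (DC c).
Proof.
have nl := V1_lin.
rewrite -[LHS]coactG_counitr -/(coactCA DC _) V1_coact /coactCCA coactG_tm /tmap.
rewrite (tl_postcomp (L := tl (fun c1 y => tm T (id c1) (nu1 y)))); [|linearity|linearity].
rewrite (tl_postcomp (L := tl _)); [|linearity|linearity].
by apply: eq_tl => c1 c2; tl_simpl.
Qed.

(* A-linearity of [nu1] rewritten on [theta]: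
   [sum a_0 theta(c a_{-2}, d a_{-1}) = theta(c, d) a]. *)
Lemma theta_actA c d a :
  tl (fun h a0 => tl (fun h1 h2 => mA a0 (theta (actC c h1) (actC d h2))) (DH h)) (rhoA a)
  = mA (theta c d) a.
Proof.
have nl := V1_lin.
rewrite -epsI_actG //; change (actG rhoA actC mA) with (actCA mA rhoA actC).
rewrite -V1_actA /actCCA actG_tm; last by case: actCA_rmod.
transitivity (epsI epsC (nu1 (tl (fun h a0 => tl (fun h1 h2 =>
  tm T (actC c h1) (tm T (actC d h2) a0)) (DH h)) (rhoA a)))); last first.
  congr (epsI epsC (nu1 _)).
  rewrite rhoA_coassoc_tl; [|linearity|linearity|linearity].
  apply: eq_tl => h y.
  rewrite /actCA actG_tm // (tl_postcomp (L := tm T (actC c h))); [|linearity|linearity].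
  by apply: eq_tl => h' a'; rewrite mA_1l.
rewrite (tl_postcomp (L := fun z => epsI epsC (nu1 z))); [|linearity|linearity].
apply: eq_tl => h a0.
rewrite (tl_postcomp (L := fun z => epsI epsC (nu1 z))); [|linearity|linearity].
apply: eq_tl => h1 h2.
rewrite -[X in _ = epsI _ (nu1 (tm _ _ (tm _ _ X)))](mA_1r a0) V1_mulA epsI_tmap //.
exact: bilin_linr.
Qed.

(* Condition (ii) of V_1 pushed forward along [g]. *)
Lemma theta_coact (N : lmodType k) (g : A -> N) c x : lin g ->
  tl (fun d e => tl (fun h a => tm T (actC e h) (g a)) (rhoA (theta c d))) (DC x)
  = tl (fun c1 c2 => tm T c1 (g (theta c2 x))) (DC c).
Proof.
move=> gl; have nl := V1_lin.
transitivity (tmap id g (nu1 (tm T c (tm T x oneA)))); last first.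
  rewrite V1_tm_one /tmap (tl_postcomp (L := tl _)); [|linearity|linearity].
  by apply: eq_tl => c1 c2; tl_simpl.
rewrite -V1_theta /tmap (tl_postcomp (L := tl _)); [|linearity|linearity].
apply: eq_tl => d e; rewrite (tl_postcomp (L := tl _)); [|linearity|linearity].
by apply: eq_tl => h a'; tl_simpl.
Qed.

Section Component.
Variables (M : lmodType k) (actM : M -> A -> M) (rhoM : M -> tens T C M).
Hypothesis HM : is_DHmod mA oneA rhoA actC DC epsC actM rhoM.

Lemma Psi_lin : lin (Psi oneA epsC nu1 actM rhoM).
Proof.
have [[actMb _ _] rhoMl _ _ _] := HM; have nl := V1_lin.
by rewrite /Psi; linearity.
Qed.

Lemma Psi_actG x a :
  Psi oneA epsC nu1 actM rhoM (actG rhoA actC actM x a)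
  = actM (Psi oneA epsC nu1 actM rhoM x) a.
Proof.
have [[actMb actMa actM1] rhoMl rhoMco rhoMeps rhoMcomp] := HM.
have nl := V1_lin; have Pl := Psi_lin.
apply: (tens_ext (g := fun x => Psi oneA epsC nu1 actM rhoM (actG rhoA actC actM x a))
                 (h := fun x => actM (Psi oneA epsC nu1 actM rhoM x) a)); [linearity|linearity|].
move=> c m.
transitivity (tl (fun e m' => tl (fun h a0 => tl (fun h1 h2 =>
    actM (actM m' a0) (theta (actC c h1) (actC e h2))) (DH h)) (rhoA a)) (rhoM m)).
  rewrite actG_tm // /Psi (tl_postcomp (L := tl _)); [|linearity|linearity].
  transitivity (tl (fun h a0 => tl (fun e m' => tl (fun h' a' =>
     actM (actM m' a') (theta (actC c h) (actC e h'))) (rhoA a0)) (rhoM m)) (rhoA a)).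
    apply: eq_tl => h a0; rewrite tlE; [|linearity].
    rewrite rhoMcomp (tl_postcomp (L := tl _)); [|linearity|linearity].
    apply: eq_tl => e m'; rewrite (tl_postcomp (L := tl _)); [|linearity|linearity].
    by apply: eq_tl => h' a'; tl_simpl.
  rewrite tl_exchange; [|linearity|linearity]; apply: eq_tl => e m'.
  by rewrite rhoA_coassoc_tl; [|linearity|linearity|linearity].
rewrite /Psi tlE; [|linearity].
rewrite (tl_postcomp (L := fun z => actM z a)); [|linearity|linearity].
apply: eq_tl => e m'.
rewrite actMa -theta_actA (tl_postcomp (L := actM m')); [|linearity|linearity].
apply: eq_tl => h a0; rewrite (tl_postcomp (L := actM m')); [|linearity|linearity].
by apply: eq_tl => h1 h2; rewrite actMa.
Qed.

Lemma coact_Psi x :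
  rhoM (Psi oneA epsC nu1 actM rhoM x)
  = tmap id (Psi oneA epsC nu1 actM rhoM) (coactG DC (N:=M) x).
Proof.
have [[actMb actMa actM1] rhoMl rhoMco rhoMeps rhoMcomp] := HM.
have nl := V1_lin; have Pl := Psi_lin.
apply: (tens_ext (g := fun x => rhoM (Psi oneA epsC nu1 actM rhoM x))
  (h := fun x => tmap id (Psi oneA epsC nu1 actM rhoM) (coactG DC (N:=M) x)));
  [linearity|linearity|].
move=> c m.
transitivity (tl (fun x m1 => tl (fun c1 c2 => tm T c1 (actM m1 (theta c2 x))) (DC c)) (rhoM m)).
  rewrite /Psi tlE; [|linearity]; rewrite (tl_postcomp (L := rhoM)); [|linearity|linearity].
  transitivity (tl (fun d m0 => tl (fun e m1 => tl (fun h a' => tm T (actC e h) (actM m1 a'))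
      (rhoA (theta c d))) (rhoM m0)) (rhoM m)).
    by apply: eq_tl => d m0; rewrite rhoMcomp.
  rewrite -(coassoc_tl (D := DC) (rho := rhoM) (m := m)
    (F := fun d e m1 => tl (fun h a' => tm T (actC e h) (actM m1 a')) (rhoA (theta c d))));
    [|linearity|linearity|exact: rhoMco|linearity|linearity|linearity].
  by apply: eq_tl => x0 m1; rewrite theta_coact //; apply: bilin_linr.
rewrite coactG_tm /tmap (tl_postcomp (L := tl _)); [|linearity|linearity].
rewrite tl_exchange; [|linearity|linearity].
apply: eq_tl => c1 c2; rewrite tlE; [|linearity].
by rewrite /Psi tlE; [|linearity]; rewrite (tl_postcomp (L := tm T (id c1))); [|linearity|linearity].
Qed.

End Component.

Lemma Psi_nat : is_nat mA oneA rhoA actC DC epsC (Psi oneA epsC nu1).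
Proof.
have nl := V1_lin.
split=> [M actM rhoM HM | M actM rhoM N actN rhoN f HM HN [[fl fA] fco] x].
  by split; [split; [exact: Psi_lin | exact: Psi_actG] | exact: coact_Psi].
have [[actMb _ _] rhoMl _ _ _] := HM; have [[actNb _ _] rhoNl _ _ _] := HN.
apply: (tens_ext (g := fun x => f (Psi oneA epsC nu1 actM rhoM x))
                 (h := fun x => Psi oneA epsC nu1 actN rhoN (tmap id f x)));
  [rewrite /Psi; linearity | rewrite /Psi; linearity |].
move=> c m; rewrite /Psi /tmap; tl_simpl.
rewrite fco /tmap (tl_postcomp (L := f)); [|linearity|linearity].
rewrite (tl_postcomp (L := tl _)); [|linearity|linearity].
by apply: eq_tl => d m0; tl_simpl; rewrite fA.
Qed.

Lemma Phi_Psi x : Phi mA rhoA actC DC (Psi oneA epsC nu1) x = nu1 x.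
Proof.
have nl := V1_lin.
apply: (tens_ext (g := Phi mA rhoA actC DC (Psi oneA epsC nu1)) (h := nu1));
  [rewrite /Phi /Psi; linearity | exact: nl |].
move=> c z.
apply: (tens_ext (g := fun z => Phi mA rhoA actC DC (Psi oneA epsC nu1) (tm T c z))
                 (h := fun z => nu1 (tm T c z))); [rewrite /Phi /Psi; linearity | linearity |].
move=> d a.
rewrite -[X in _ = nu1 (tm _ _ (tm _ _ X))](mA_1r a) V1_mulA -V1_theta.
rewrite /Phi /Psi tlE; [|linearity].
rewrite /coactCA coactG_tm (tl_postcomp (L := tl _)); [|linearity|linearity].
rewrite /tmap (tl_postcomp (L := tl _)); [|linearity|linearity].
apply: eq_tl => d1 d2; rewrite tlE; [|linearity].
rewrite /actCA actG_tm // (tl_postcomp (L := tl _)); [|linearity|linearity].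
by apply: eq_tl => h a0; tl_simpl.
Qed.

End FromV1.

Lemma id_morph (M : lmodType k) (actM : M -> A -> M) (rhoM : M -> tens T C M) :
  is_morph actM rhoM actM rhoM (fun x => x).
Proof. by split; [split | move=> m; rewrite tmap_id]. Qed.

Lemma morph_comp (M1 M2 M3 : lmodType k)
  (act1 : M1 -> A -> M1) (rho1 : M1 -> tens T C M1)
  (act2 : M2 -> A -> M2) (rho2 : M2 -> tens T C M2)
  (act3 : M3 -> A -> M3) (rho3 : M3 -> tens T C M3) (f : M1 -> M2) (g : M2 -> M3) :
  is_morph act1 rho1 act2 rho2 f -> is_morph act2 rho2 act3 rho3 g ->
  is_morph act1 rho1 act3 rho3 (fun x => g (f x)).
Proof.
move=> [[fl fA] fc] [[gl gA] gc]; split; [split|].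
- exact: lin_comp.
- by move=> m a; rewrite fA gA.
- by move=> m; rewrite gc fc; symmetry; apply: tmap_comp.
Qed.

Definition retracts_coaction (nu : natfam T A C) :=
  forall (M : lmodType k) actM rhoM,
    is_DHmod mA oneA rhoA actC DC epsC actM rhoM -> forall m, nu M actM rhoM (rhoM m) = m.

(* Rafael's criterion for the adjunction F -| G, whose unit is the coaction:
   the left inverse of F on morphisms is [f |-> nu_N o G F f o rhoM]. *)
Lemma F_separable_of_retraction nu :
  is_nat mA oneA rhoA actC DC epsC nu -> retracts_coaction nu ->
  F_separable mA oneA rhoA actC DC epsC.
Proof.
move=> Hnat Hr.
exists (fun M N actM rhoM actN rhoN f m => nu N actN rhoN (tmap id f (rhoM m))).
move=> M N actM rhoM actN rhoN HM HN; split.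
- move=> f Hf; have [[actMb _ _] _ _ _ _] := HM; have [[actNb _ _] _ _ _ _] := HN.
  apply: (morph_comp (g := fun y => nu N actN rhoN (tmap id f y)) (coact_morph HM)).
  exact: (morph_comp (g := nu N actN rhoN) (G_morph actMb actNb Hf) (nat_morph Hnat HN)).
- by move=> f [_ fc] m; rewrite -fc Hr.
- move=> M' actM' rhoM' N' actN' rhoN' g h f HM' HN' [[gl gA] gc] Hh [fl fA] m.
  have hl : lin h by case: Hh => [[]].
  rewrite (tmap_comp (f := fun x => f (g x)) (g := h)); [|linearity|done].
  rewrite (tmap_comp (f := g) (g := f)) // -gc.
  by case: Hnat => _ nu_nat; rewrite (nu_nat _ _ _ _ _ _ _ HN HN' Hh).
Qed.

(* Conversely [nu_M := P(eps_M)], with [eps_M = epsI epsC : G F M -> M] the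
   counit of the adjunction. *)
Lemma retraction_of_F_separable :
  F_separable mA oneA rhoA actC DC epsC ->
  exists nu, is_nat mA oneA rhoA actC DC epsC nu /\ retracts_coaction nu.
Proof.
move=> [P HP].
pose nu : natfam T A C := fun M actM rhoM =>
  P (tens T C M) M (actG rhoA actC actM) (coactG DC (N:=M)) actM rhoM (epsI epsC).
exists nu; split; first split.
- move=> M actM rhoM HM; have [[actMb actMa actM1] _ _ _ _] := HM.
  have [P_morph _ _] := HP _ _ _ _ _ _ (G_DHmod actMb actMa actM1) HM.
  exact: (P_morph _ (epsI_Amorph actMb)).
- move=> M actM rhoM N actN rhoN f HM HN Hf x.
  have [[actMb actMa actM1] _ _ _ _] := HM; have [[actNb actNa actN1] _ _ _ _] := HN.
  have GM := G_DHmod actMb actMa actM1; have GN := G_DHmod actNb actNa actN1.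
  have [_ _ P_natM] := HP _ _ _ _ _ _ GM HM.
  have [_ _ P_natN] := HP _ _ _ _ _ _ GN HN.
  rewrite /nu -(P_natM _ _ _ _ _ _ (fun x => x) f (epsI epsC) GM HN (id_morph _ _) Hf
                 (epsI_Amorph actMb) x).
  rewrite -(P_natN _ _ _ _ _ _ (tmap id f) (fun x => x) (epsI epsC) GM HN
              (G_morph actMb actNb Hf.1) (id_morph _ _) (epsI_Amorph actNb) x).
  congr (P _ _ _ _ _ _ _ x); apply: functional_extensionality => y.
  by case: Hf => [[fl _] _]; rewrite epsI_tmap.
- move=> M actM rhoM HM m; have [[actMb actMa actM1] _ _ rhoMeps _] := HM.
  have GM := G_DHmod actMb actMa actM1.
  have [_ _ P_nat] := HP _ _ _ _ _ _ GM HM.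
  rewrite /nu -(P_nat _ _ _ _ _ _ rhoM (fun x => x) (epsI epsC) HM HM (coact_morph HM)
                (id_morph _ _) (epsI_Amorph actMb) m).
  have -> : (fun x => epsI epsC (rhoM x)) = (fun x => x).
    by apply: functional_extensionality => y; rewrite rhoMeps.
  by have [_ P_id _] := HP _ _ _ _ _ _ HM HM; apply: (P_id _ (id_morph _ _)).
Qed.

Lemma F_separable_iff_normalized :
  F_separable mA oneA rhoA actC DC epsC <->
  exists nu1, inV1 mA oneA rhoA actC DC epsC nu1 /\ normalized DC nu1.
Proof.
split=> [/retraction_of_F_separable [nu [Hnat Hr]] | [nu1 [H1 Hn]]].
  by exists (Phi mA rhoA actC DC nu); split; [exact: Phi_inV1 | apply/normalized_Phi_iff].
apply: (F_separable_of_retraction (Psi_nat H1)); apply/normalized_Phi_iff; first exact: Psi_nat.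
by move=> c a; rewrite -[RHS](Hn c a); apply: eq_tl => c1 c2; apply: Phi_Psi.
Qed.

End DoiHopfModules.

Unset Implicit Arguments.

Theorem theorem2p1p3 (k : comPzRingType) (T : tensor_provider k)
  (H A C : lmodType k)
  (mH : H -> H -> H) (oneH : H) (DH : H -> tens T H H) (epsH : H -> k)
  (mA : A -> A -> A) (oneA : A) (rhoA : A -> tens T H A)
  (actC : C -> H -> C) (DC : C -> tens T C C) (epsC : C -> k) :
  DH_datum mH oneH DH epsH mA oneA rhoA actC DC epsC ->
  is_hopf mH oneH DH epsH ->
  (forall nu, is_nat mA oneA rhoA actC DC epsC nu ->
      inV1 mA oneA rhoA actC DC epsC (Phi mA rhoA actC DC nu))
  /\ (forall (nu nu' : natfam T A C) (a : k) x,
        Phi mA rhoA actC DC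
            (fun M actM rhoM y => a *: nu M actM rhoM y + nu' M actM rhoM y) x
        = a *: Phi mA rhoA actC DC nu x + Phi mA rhoA actC DC nu' x)
  /\ (forall nu1, inV1 mA oneA rhoA actC DC epsC nu1 ->
        is_nat mA oneA rhoA actC DC epsC (Psi oneA epsC nu1))
  /\ (forall nu1, inV1 mA oneA rhoA actC DC epsC nu1 ->
        forall x, Phi mA rhoA actC DC (Psi oneA epsC nu1) x = nu1 x)
  /\ (forall nu, is_nat mA oneA rhoA actC DC epsC nu ->
        forall (M : lmodType k) actM rhoM,
        is_DHmod mA oneA rhoA actC DC epsC actM rhoM ->
        forall x, Psi oneA epsC (Phi mA rhoA actC DC nu) actM rhoM x
                  = nu M actM rhoM x)
  /\ (forall nu, is_nat mA oneA rhoA actC DC epsC nu ->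
        (normalized DC (Phi mA rhoA actC DC nu) <->
         forall (M : lmodType k) actM rhoM,
           is_DHmod mA oneA rhoA actC DC epsC actM rhoM ->
           forall m, nu M actM rhoM (rhoM m) = m))
  /\ (F_separable mA oneA rhoA actC DC epsC <->
      exists nu1, inV1 mA oneA rhoA actC DC epsC nu1 /\ normalized DC nu1).
Proof.
move=> [[[mHb _ _ _] [DHl epsHl _ _ _] _ _ _]
        [[mAb mA_assoc mA_1l mA_1r] rhoAl rhoA_co rhoA_eps [rhoA_mul rhoA_one]]
        [[DCl epsCl DC_co DC_epsI DC_Ieps] actCb [actC_assoc actC_1] DC_act epsC_act] _] _.
split; first by move=> nu Hnu; apply: (Phi_inV1 (mH := mH) (oneH := oneH) (DH := DH)).
split; first by [].
split; first by move=> nu1 H1; apply: (Psi_nat (mH := mH) (oneH := oneH) (DH := DH) (epsH := epsH)).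
split; first by move=> nu1 H1 x; apply: Phi_Psi.
split.
  by move=> nu Hnu M actM rhoM HM x; apply: (Psi_Phi (mH := mH) (oneH := oneH) (DH := DH)).
split; first by move=> nu Hnu; apply: (normalized_Phi_iff (mH := mH) (oneH := oneH) (DH := DH)).
by apply: (F_separable_iff_normalized (mH := mH) (oneH := oneH) (DH := DH) (epsH := epsH)).
Qed.
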